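(* Let $\rho_{AB}$ be positive semidefinite on $\mathcal{H}_A\otimes\mathcal{H}_B$ with $0<\operatorname{tr}\rho_{AB}\le1$, and let $\tau_B$ be positive semidefinite on $\mathcal{H}_B$ with $0<\operatorname{tr}\tau_B\le1$ and $\operatorname{supp}\tau_B\supseteq\operatorname{supp}\rho_B$. Then, with $d_A=\dim\mathcal{H}_A$, $$d_u(A|B)_\rho\le\frac12\sqrt{d_A\,\Gamma_C(\rho_{AB}|\tau_B)-\operatorname{tr}\big(\rho_B\tau_B^{-1/2}\rho_B\tau_B^{-1/2}\big)}.$$
   Context: Hilbert spaces are finite-dimensional; inverses are generalized inverses (on the support); $\rho_B=\operatorname{tr}_A\rho_{AB}$. $\Gamma_C(\rho_{AB}|\tau_B):=\operatorname{tr}\big((\rho_{AB}(\mathbb{1}_A\otimes\tau_B^{-1/2}))^2\big)$. Distance from uniform: $d_u(A|B)_\rho=\min_{\sigma_B}\frac12\|\rho_{AB}-\omega_A\otimes\sigma_B\|_1$ where $\omega_A=\mathbb{1}_A/d_A$ and the minimum is over positive semidefinite $\sigma_B$ with $\operatorname{tr}\sigma_B=\operatorname{tr}\rho_B$. *)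

From HB Require Import structures.
From mathcomp Require Import all_boot all_order all_algebra.
From mathcomp Require Import complex mxtens.
From mathcomp Require Import boolp classical_sets reals.

Set Implicit Arguments.
Unset Strict Implicit.
Unset Printing Implicit Defensive.

Import Order.TTheory GRing.Theory Num.Theory.
Local Open Scope ring_scope.
Local Open Scope sesquilinear_scope.

Section QDefs.
Variable R : realType.
Local Notation C := (R[i]).

Definition psdmx n (A : 'M[C]_n) : Prop :=
  A \is hermsymmx /\ forall v : 'rV[C]_n, 0 <= (v *m A *m v ^t*) 0 0.

(* Functional calculus for Hermitian (normal) matrices via the spectral
   decomposition A = P^-1 diag(sp) P of mathcomp's spectral.v. *)
Definition mxfun n (f : C -> C) (A : 'M[C]_n) : 'M[C]_n :=
  invmx (spectralmx A) *m diag_mx (map_mx f (spectral_diag A)) *m spectralmx A.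

Definition sqrtmx n (A : 'M[C]_n) : 'M[C]_n := mxfun sqrtC A.

(* Generalized inverse square root A^{-1/2} (inverse on the support). *)
Definition invsqrtmx n (A : 'M[C]_n) : 'M[C]_n :=
  mxfun (fun x => if x == 0 then 0 else (sqrtC x)^-1) A.

Definition trnorm n (X : 'M[C]_n) : C := \tr (sqrtmx (X ^t* *m X)).

(* Partial trace over A: rho_B = tr_A rho_AB, with H_A (x) H_B indexed by
   mxtens_index (a, b), matching the Kronecker product tensmx (A *t B). *)
Definition ptrA dA dB (rho : 'M[C]_(dA * dB)) : 'M[C]_dB :=
  \matrix_(b, b') \sum_(a < dA) rho (mxtens_index (a, b)) (mxtens_index (a, b')).

(* supp A = range (column space) of A; the rows of A^T span it. *)
Definition supp_sub n (A B : 'M[C]_n) : bool := (A^T <= B^T)%MS.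

Definition GammaC dA dB (rho : 'M[C]_(dA * dB)) (tau : 'M[C]_dB) : C :=
  let X := rho *m (1%:M *t invsqrtmx tau) in \tr (X *m X).

Definition unif_tens dA dB (sigma : 'M[C]_dB) : 'M[C]_(dA * dB) :=
  (dA%:R)^-1 *: ((1%:M : 'M[C]_dA) *t sigma).

(* d_u(A|B)_rho = min over psd sigma_B with tr sigma_B = tr rho_B of
   1/2 ||rho_AB - omega_A (x) sigma_B||_1 (taken as an infimum over R;
   the trace norm is real, we take its real part). *)
Definition d_u dA dB (rho : 'M[C]_(dA * dB)) : R :=
  inf [set r : R | exists sigma : 'M[C]_dB,
         [/\ psdmx sigma, \tr sigma = \tr (ptrA rho) &
             r = @complex.Re R (trnorm (rho - unif_tens dA sigma)) / 2]].

End QDefs.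

(* Take sigma_B = rho_B, so that d_u(A|B) <= ||Delta||_1 / 2 with
   Delta = rho_AB - omega_A (x) rho_B.  Write ||Delta||_1 = tr (Delta Q) for a
   partial isometry Q and pass to an eigenbasis of sigma = 1_A (x) tau_B, with
   eigenvalues s_j^2; by the support condition and positivity of rho_AB, the
   rows and columns of Delta vanish where s_j = 0.  Entrywise AM-GM with a free
   scale then gives the weighted Cauchy-Schwarz inequality
     ||Delta||_1^2 <= tr sigma * tr ((Delta sigma^-1/2)^2),
   where tr sigma <= d_A, and expanding the square through the partial trace
   gives d_A tr ((Delta sigma^-1/2)^2)
     = d_A Gamma_C - tr (rho_B tau^-1/2 rho_B tau^-1/2). *)

From HB Require Import structures.
From mathcomp Require Import all_boot all_order all_algebra.
From mathcomp Require Import complex mxtens.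
From mathcomp Require Import reals.
From mathcomp Require Import ring lra.
Import Order.TTheory GRing.Theory Num.Theory.
Local Open Scope ring_scope.
Local Open Scope sesquilinear_scope.
Set Implicit Arguments.
Unset Strict Implicit.
Unset Printing Implicit Defensive.

Section Adjoint.
Variable C : numClosedFieldType.

Lemma trmxC_mul m n p (A : 'M[C]_(m, n)) (B : 'M[C]_(n, p)) :
  (A *m B)^t* = B^t* *m A^t*.
Proof. by rewrite trmx_mul map_mxM. Qed.

Lemma trmxCD m n (A B : 'M[C]_(m, n)) : (A + B)^t* = A^t* + B^t*.
Proof. by rewrite linearD /= map_mxD. Qed.

Lemma trmxCN m n (A : 'M[C]_(m, n)) : (- A)^t* = - A^t*.
Proof. by rewrite linearN /= map_mxN. Qed.

Lemma trmxC1 n : (1%:M : 'M[C]_n)^t* = 1%:M.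
Proof. by rewrite trmx1 map_mx1. Qed.

Lemma hermitianmxCP n (A : 'M[C]_n) : reflect (A^t* = A) (A \is hermsymmx).
Proof.
apply: (iffP (is_hermitianmxP _ _ _)); rewrite expr0 scale1r; exact: esym.
Qed.

Lemma unitarymxKV n (U : 'M[C]_n) : U \is unitarymx -> U^t* *m U = 1%:M.
Proof. by move=> Uu; rewrite -[U^t*]mul1mx mulmxKtV. Qed.

Lemma mulmx_trmxC_diag_ge0 m n (Y : 'M[C]_(m, n)) i : 0 <= (Y *m Y^t*) i i.
Proof.
rewrite mxE; apply: sumr_ge0 => j _; rewrite !mxE; exact: mul_conjC_ge0.
Qed.

Lemma quad_diag_rowE m n (M : 'M[C]_(m, n)) (P : 'M[C]_n) l :
  (M *m P *m M^t*) l l = (row l M *m P *m (row l M)^t*) 0 0.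
Proof.
rewrite !mxE; apply: eq_bigr => k _; rewrite !mxE; congr (_ * _).
by apply: eq_bigr => j _; rewrite !mxE.
Qed.

Lemma orthoproj_quad_le n (P : 'M[C]_n) (w : 'rV[C]_n) :
  P^t* = P -> P *m P = P -> (w *m P *m w^t*) 0 0 <= (w *m w^t*) 0 0.
Proof.
move=> PC PP; rewrite -subr_ge0.
have E : w *m w^t* - w *m P *m w^t* = (w - w *m P) *m (w - w *m P)^t*.
  rewrite trmxCD trmxCN trmxC_mul PC mulmxBl !mulmxBr !mulmxA.
  by rewrite -[w *m P *m P]mulmxA PP subrr subr0.
by have := mulmx_trmxC_diag_ge0 (w - w *m P) 0; rewrite -E !mxE.
Qed.

Lemma mxtrace_unitary_conj n (W M : 'M[C]_n) :
  W \is unitarymx -> \tr (W *m M *m W^t*) = \tr M.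
Proof. by move=> Wu; rewrite mxtrace_mulC mulmxA unitarymxKV ?mul1mx. Qed.

Lemma unitary_conj_mul n (W A B : 'M[C]_n) : W \is unitarymx ->
  (W *m A *m W^t*) *m (W *m B *m W^t*) = W *m (A *m B) *m W^t*.
Proof. by move=> Wu; rewrite !mulmxA mulmxKtV // !mulmxA. Qed.

Lemma trmxC_tens m n p q (A : 'M[C]_(m, n)) (B : 'M[C]_(p, q)) :
  (A *t B)^t* = A^t* *t B^t*.
Proof. by rewrite trmx_tens map_mxT. Qed.

Definition partial_isometry n (P : 'M[C]_n) := P *m P^t* *m P = P.

Lemma partial_isometry_trmxC n (P : 'M[C]_n) :
  partial_isometry P -> partial_isometry (P^t*).
Proof.
rewrite /partial_isometry trmxCK => PP.
by rewrite -[in RHS]PP !trmxC_mul trmxCK mulmxA.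
Qed.

Lemma partial_isometry_conj n (W P : 'M[C]_n) : W \is unitarymx ->
  partial_isometry P -> partial_isometry (W *m P *m W^t*).
Proof.
move=> Wu PP; rewrite /partial_isometry !trmxC_mul trmxCK !mulmxA.
by rewrite !(mulmxKtV _ Wu) // -[in RHS]PP !mulmxA.
Qed.

Lemma partial_isometry_row_le1 n (P : 'M[C]_n) l :
  partial_isometry P -> \sum_j `|P l j| ^+ 2 <= 1.
Proof.
move=> PP; have -> : \sum_j `|P l j| ^+ 2 = (P *m P^t*) l l.
  by rewrite mxE; apply: eq_bigr => j _; rewrite normCK !mxE.
have entryE (M : 'M[C]_n) : M l l = (row l 1%:M *m M *m (row l 1%:M)^t*) 0 0.
  by rewrite -quad_diag_rowE trmxC1 mul1mx mulmx1.
rewrite entryE; apply: le_trans (orthoproj_quad_le _ _ _) _.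
- by rewrite trmxC_mul trmxCK.
- by rewrite mulmxA PP.
- by have := entryE 1%:M; rewrite mulmx1 mxE eqxx => <-.
Qed.

Lemma partial_isometry_col_le1 n (P : 'M[C]_n) l :
  partial_isometry P -> \sum_j `|P j l| ^+ 2 <= 1.
Proof.
move=> /partial_isometry_trmxC /(partial_isometry_row_le1 l).
by under eq_bigr do rewrite !mxE norm_conjC.
Qed.

End Adjoint.

Section Spectral.
Variable C : numClosedFieldType.

Lemma hermitian_spectralE n (A : 'M[C]_n) : A \is hermsymmx ->
  A = (spectralmx A)^t* *m diag_mx (spectral_diag A) *m spectralmx A.
Proof.
move=> hA; have /orthomx_spectralP {1}-> := hermitian_normalmx hA.
by rewrite invmx_unitary // spectral_unitarymx.
Qed.

Lemma hermitian_spectral_conj n (A : 'M[C]_n) : A \is hermsymmx ->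
  spectralmx A *m A *m (spectralmx A)^t* = diag_mx (spectral_diag A).
Proof.
have Pu := spectral_unitarymx A.
move=> /hermitian_spectralE {2}->.
by rewrite !mulmxA mulmxtVK // (unitarymxP Pu) mul1mx.
Qed.

End Spectral.

Section PsdTraceNorm.
Variable R : realType.
Local Notation C := (R[i]).

Lemma psdmx_spectral_diag_ge0 n (A : 'M[C]_n) i :
  psdmx A -> 0 <= spectral_diag A 0 i.
Proof.
move=> [hA pA].
have := congr1 (fun M : 'M[C]_n => M i i) (hermitian_spectral_conj hA).
by rewrite /= [in RHS]mxE eqxx mulr1n quad_diag_rowE => <-.
Qed.

Lemma psdmx_trmxC_mul m n (X : 'M[C]_(m, n)) : psdmx (X^t* *m X).
Proof.
split; first by apply/hermitianmxCP; rewrite trmxC_mul trmxCK.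
move=> v; have := mulmx_trmxC_diag_ge0 (v *m X^t*) 0.
by rewrite trmxC_mul trmxCK !mulmxA.
Qed.

Lemma psdmx_quad_eq0 n (M : 'M[C]_n) (w : 'rV[C]_n) :
  psdmx M -> (w *m M *m w^t*) 0 0 = 0 -> w *m M = 0.
Proof.
move=> psdM; have [hM _] := psdM.
set P := spectralmx M; set p := spectral_diag M.
have p_ge0 i : 0 <= p 0 i by exact: psdmx_spectral_diag_ge0.
have ME := hermitian_spectralE hM; rewrite -/P -/p in ME.
clearbody P p; set y := w *m P^t*.
have wM : w *m M = y *m diag_mx p *m P by rewrite ME !mulmxA.
have -> : (w *m M *m w^t*) 0 0 = \sum_i p 0 i * (y 0 i * (y 0 i)^*).
  have Py : P *m w^t* = y^t* by rewrite /y trmxC_mul trmxCK.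
  rewrite wM -mulmxA Py mul_mx_diag mxE.
  by apply: eq_bigr => i _; rewrite !mxE mulrCA mulrA.
move=> /psumr_eq0P py0.
have py i : p 0 i * y 0 i = 0.
  move: (py0 (fun i _ => mulr_ge0 (p_ge0 i) (mul_conjC_ge0 (y 0 i))) i isT).
  move/eqP; rewrite mulf_eq0 mul_conjC_eq0 => /orP[] /eqP ->.
    by rewrite mul0r.
  by rewrite mulr0.
clearbody y; rewrite wM mul_mx_diag; apply/matrixP => i j.
rewrite !mxE big1 // => k _.
by rewrite !mxE ord1 [y 0 k * _]mulrC py mul0r.
Qed.

Lemma mxtrace_mxfun n f (A : 'M[C]_n) :
  \tr (mxfun f A) = \sum_j f (spectral_diag A 0 j).
Proof.
rewrite /mxfun mxtrace_mulC mulmxA mulmxV ?spectral_unit // mul1mx mxtrace_diag.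
by apply: eq_bigr => j _; rewrite mxE.
Qed.

Lemma trnorm_ge0 n (X : 'M[C]_n) : 0 <= trnorm X.
Proof.
rewrite /trnorm /sqrtmx mxtrace_mxfun; apply: sumr_ge0 => j _.
by rewrite sqrtC_ge0; apply: psdmx_spectral_diag_ge0; exact: psdmx_trmxC_mul.
Qed.

(* The polar part Q = |X|^+ X^* of X attains the trace norm. *)
Lemma trnorm_partial_isometry n (X : 'M[C]_n) :
  exists2 Q, partial_isometry Q & trnorm X = \tr (X *m Q).
Proof.
have psdX := psdmx_trmxC_mul X.
set V := spectralmx (X^t* *m X); set mu := spectral_diag (X^t* *m X).
have Vu : V \is unitarymx by exact: spectral_unitarymx.
have VXXV : V *m (X^t* *m X) *m V^t* = diag_mx mu.
  exact: hermitian_spectral_conj psdX.1.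
have mu_ge0 j : 0 <= mu 0 j by exact: psdmx_spectral_diag_ge0.
have -> : trnorm X = \sum_j sqrtC (mu 0 j) by rewrite /trnorm /sqrtmx mxtrace_mxfun.
clearbody V mu; pose s j := sqrtC (mu 0 j).
have mu_s j : mu 0 j = s j ^+ 2 by rewrite sqrtCK.
pose N := diag_mx (\row_j (s j)^-1).
have NC : N^t* = N.
  rewrite tr_diag_mx map_diag_mx; congr diag_mx; apply/rowP => j.
  by rewrite !mxE; apply: geC0_conj; rewrite invr_ge0 sqrtC_ge0.
have NmuNN : N *m diag_mx mu *m N *m N = N.
  rewrite !mulmx_diag; congr diag_mx; apply/rowP => j; rewrite !mxE mu_s.
  by have [->|nz] := eqVneq (s j) 0; [rewrite invr0 !(mul0r, mulr0) | field].
exists (V^t* *m N *m V *m X^t*).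
  rewrite /partial_isometry !trmxC_mul !trmxCK NC -[in RHS]NmuNN -VXXV.
  by rewrite !mulmxA !(mulmxtVK _ Vu).
rewrite !mulmxA mxtrace_mulC !mulmxA (mxtrace_mulC _ V) !mulmxA.
rewrite -[V *m X^t* *m X]mulmxA VXXV mulmx_diag mxtrace_diag.
apply: eq_bigr => j _; rewrite !mxE -/(s j) mu_s.
by have [->|nz] := eqVneq (s j) 0; [rewrite expr0n invr0 mulr0 | field].
Qed.

End PsdTraceNorm.

Lemma big_mxtens_index (V : nmodType) m n (F : 'I_(m * n) -> V) :
  \sum_i F i = \sum_(a < m) \sum_(b < n) F (mxtens_index (a, b)).
Proof.
rewrite pair_big /= (reindex (@mxtens_index m n)) /=; last first.
  by exists (@mxtens_unindex m n) => x _; rewrite (mxtens_indexK, mxtens_unindexK).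
by apply: eq_bigr => -[a b].
Qed.

Lemma mxtens_index_eq m n (a a' : 'I_m) (b b' : 'I_n) :
  (mxtens_index (a, b) == mxtens_index (a', b')) = (a == a') && (b == b').
Proof. by rewrite (can_eq (@mxtens_indexK _ _)) xpair_eqE. Qed.

Section TensorIdentity.
Variable K : comPzRingType.

Lemma tens1mx_mulE m n k (M : 'M[K]_n) (X : 'M[K]_(m * n, k)) a b j :
  ((1%:M : 'M_m) *t M *m X) (mxtens_index (a, b)) j =
  \sum_(b' < n) M b b' * X (mxtens_index (a, b')) j.
Proof.
rewrite mxE big_mxtens_index (bigD1 a) //= [X in _ + X]big1 ?addr0; last first.
  move=> a' a'a; apply: big1 => b' _; rewrite tensmxE mxE eq_sym (negbTE a'a).
  by rewrite !mul0r.
by apply: eq_bigr => b' _; rewrite tensmxE mxE eqxx mul1r.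
Qed.

Lemma mul_tens1mxE m n k (N : 'M[K]_n) (X : 'M[K]_(k, m * n)) i a b :
  (X *m ((1%:M : 'M_m) *t N)) i (mxtens_index (a, b)) =
  \sum_(b' < n) X i (mxtens_index (a, b')) * N b' b.
Proof.
rewrite mxE big_mxtens_index (bigD1 a) //= [X in _ + X]big1 ?addr0; last first.
  move=> a' a'a; apply: big1 => b' _; rewrite tensmxE mxE (negbTE a'a).
  by rewrite mul0r mulr0.
by apply: eq_bigr => b' _; rewrite tensmxE mxE eqxx mul1r.
Qed.

Lemma tensmx11 m n : (1%:M : 'M[K]_m) *t (1%:M : 'M[K]_n) = 1%:M.
Proof.
apply/matrixP => i j.
case: (mxtens_indexP i) => a b; case: (mxtens_indexP j) => a' b'.
rewrite tensmxE !mxE mxtens_index_eq.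
by case: (a == a'); case: (b == b'); rewrite /= ?(mulr1, mulr0, mul0r).
Qed.

Lemma tens1mx_mul m n (M N : 'M[K]_n) :
  ((1%:M : 'M_m) *t M) *m ((1%:M : 'M_m) *t N) = (1%:M : 'M_m) *t (M *m N).
Proof. by rewrite tensmx_mul mulmx1. Qed.

Lemma tens1mx_diag_mx m n (v : 'rV[K]_n) :
  (1%:M : 'M_m) *t diag_mx v = diag_mx (\row_j v 0 (mxtens_unindex j).2).
Proof.
apply/matrixP => i j.
case: (mxtens_indexP i) => a b; case: (mxtens_indexP j) => a' b'.
rewrite tensmxE !mxE mxtens_index_eq mxtens_indexK /=.
by case: (a == a'); case: (b == b'); rewrite /= ?(mulr1, mulr0, mul0r, mul1r).
Qed.

End TensorIdentity.

Section PartialTrace.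
Variable R : realType.
Local Notation C := (R[i]).
Variables dA dB : nat.
Local Notation tens1mx M := ((1%:M : 'M[C]_dA) *t M).

Lemma ptrA_tens1mx_conj (M N : 'M[C]_dB) (X : 'M[C]_(dA * dB)) :
  ptrA (tens1mx M *m X *m tens1mx N) = M *m ptrA X *m N.
Proof.
apply/matrixP => b c; rewrite /ptrA !mxE.
under eq_bigr do rewrite mul_tens1mxE.
under eq_bigr do under eq_bigr do rewrite tens1mx_mulE.
rewrite exchange_big; apply: eq_bigr => c' _; rewrite mxE mulr_suml.
under eq_bigr do rewrite mulr_suml.
rewrite exchange_big; apply: eq_bigr => b' _; rewrite mxE mulr_sumr mulr_suml.
by apply: eq_bigr => a _.
Qed.

Lemma mxtrace_ptrA (X : 'M[C]_(dA * dB)) : \tr (ptrA X) = \tr X.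
Proof.
rewrite /mxtrace big_mxtens_index exchange_big; apply: eq_bigr => b _.
by rewrite mxE.
Qed.

Lemma mxtrace_tens1mx_mul (M : 'M[C]_dB) (X : 'M[C]_(dA * dB)) :
  \tr (tens1mx M *m X) = \tr (M *m ptrA X).
Proof.
rewrite -mxtrace_ptrA -[_ *m X]mulmx1 -(tensmx11 C dA dB) ptrA_tens1mx_conj.
by rewrite mulmx1.
Qed.

Lemma mxtrace_tens1mx (M : 'M[C]_dB) : \tr (tens1mx M) = dA%:R * \tr M.
Proof.
rewrite /mxtrace big_mxtens_index exchange_big mulr_sumr; apply: eq_bigr => b _.
under eq_bigr do rewrite tensmxE mxE eqxx mul1r.
by rewrite sumr_const card_ord mulr_natl.
Qed.

Lemma ptrA_trmxC (X : 'M[C]_(dA * dB)) : (ptrA X)^t* = ptrA (X^t*).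
Proof.
apply/matrixP => b c; rewrite !mxE rmorph_sum; apply: eq_bigr => a _.
by rewrite !mxE.
Qed.

Lemma psdmx_ptrA (X : 'M[C]_(dA * dB)) : psdmx X -> psdmx (ptrA X).
Proof.
move=> [/hermitianmxCP hX pX].
split; first by apply/hermitianmxCP; rewrite ptrA_trmxC hX.
move=> v; pose Z := tens1mx v.
have -> : (v *m ptrA X *m v^t*) 0 0 = \tr (Z *m X *m Z^t*).
  rewrite mxtrace_mulC mulmxA /Z trmxC_tens trmxC1 tensmx_mul mulmx1.
  rewrite mxtrace_tens1mx_mul -[in RHS]mulmxA (mxtrace_mulC (v^t*)).
  by rewrite /mxtrace big_ord1.
rewrite /mxtrace; apply: sumr_ge0 => i _; rewrite quad_diag_rowE; exact: pX.
Qed.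

End PartialTrace.

Section WeightedSchur.
Variable R : rcfType.

Lemma mul_le_amgm (a b u c : R) : 0 <= a -> 0 <= b -> 0 <= u -> 0 < c ->
  (u = 0 -> a = 0) -> a * b <= (c * (a ^+ 2 / u) + b ^+ 2 * u / c) / 2.
Proof.
move=> a0 b0 u0 c0 ua.
have [u_eq0|u_neq0] := eqVneq u 0.
  by rewrite ua // mul0r u_eq0 invr0 !(mulr0, mul0r) addr0 mul0r.
have E : (c * (a ^+ 2 / u) + b ^+ 2 * u / c) / 2 - a * b =
    (c * a - b * u) ^+ 2 / (2 * c * u).
  by field; rewrite u_neq0 gt_eqF.
rewrite -subr_ge0 E divr_ge0 ?sqr_ge0 // !mulr_ge0 //; lra.
Qed.

(* The infimum over c > 0 of (c G + D / c) / 2 is sqrt (D G). *)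
Lemma le_sqrtM_of_amgm (x G D : R) : 0 <= G -> 0 <= D ->
  (forall c, 0 < c -> x <= (c * G + D / c) / 2) -> x <= Num.sqrt (D * G).
Proof.
move=> G0 D0 xle.
have xle2 c : 0 < c -> 2 * c * x <= c * c * G + D.
  move=> c0; have e : (c * G + D / c) / 2 * (2 * c) = c * c * G + D.
    by field; rewrite gt_eqF.
  rewrite -e mulrC ler_pM2r; [exact: xle | lra].
have [x_le0|x_gt0] := lerP x 0; first exact: le_trans x_le0 (sqrtr_ge0 _).
have [G_eq0|G_neq0] := eqVneq G 0.
  have c0 : 0 < D / x + 1 by have := divr_ge0 D0 (ltW x_gt0); lra.
  have dx : D / x * x = D by rewrite divfK // gt_eqF.
  have := xle2 _ c0; rewrite G_eq0 mulr0 add0r; nra.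
have G_gt0 : 0 < G by rewrite lt_def G_neq0.
have := xle2 _ (divr_gt0 x_gt0 G_gt0); set y := x / G => hy.
have xy : x = y * G by rewrite /y divfK // gt_eqF.
have x2 : x ^+ 2 <= D * G by rewrite xy in hy *; nra.
by rewrite -[x]gtr0_norm // -sqrtr_sqr ler_sqrt // mulr_ge0.
Qed.

(* Since 2 s_j s_l <= s_j^2 + s_l^2, the row and column bounds on b give
   sum b^2 s_j s_l <= sum s^2; AM-GM with a free scale c then applies termwise. *)
Lemma weighted_schur_bound (I : finType) (a b : I -> I -> R) (s : I -> R) (D : R) :
  (forall j, 0 <= s j) -> (forall j l, 0 <= a j l) -> (forall j l, 0 <= b j l) ->
  (forall j l, s j * s l = 0 -> a j l = 0) ->
  (forall j, \sum_l b j l ^+ 2 <= 1) -> (forall l, \sum_j b j l ^+ 2 <= 1) ->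
  \sum_j s j ^+ 2 <= D ->
  \sum_j \sum_l a j l * b j l <=
    Num.sqrt (D * \sum_j \sum_l a j l ^+ 2 / (s j * s l)).
Proof.
move=> s0 a0 b0 sa rowb colb sD.
have D0 : 0 <= D by apply: le_trans sD; apply: sumr_ge0 => j _; exact: sqr_ge0.
set G := \sum_j \sum_l a j l ^+ 2 / _.
have G0 : 0 <= G.
  apply: sumr_ge0 => j _; apply: sumr_ge0 => l _.
  by rewrite divr_ge0 ?sqr_ge0 ?mulr_ge0.
set B := \sum_j \sum_l b j l ^+ 2 * (s j * s l).
have BD : B <= D.
  have Bsplit : B <= (\sum_j \sum_l b j l ^+ 2 * s j ^+ 2 +
                      \sum_j \sum_l b j l ^+ 2 * s l ^+ 2) / 2.
    rewrite -big_split /= mulr_suml; apply: ler_sum => j _.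
    rewrite -big_split /= mulr_suml; apply: ler_sum => l _.
    have := mulr_ge0 (sqr_ge0 (b j l)) (sqr_ge0 (s j - s l)); nra.
  have rowD : \sum_j \sum_l b j l ^+ 2 * s j ^+ 2 <= D.
    apply: le_trans sD; apply: ler_sum => j _.
    rewrite -mulr_suml; have := rowb j; have := sqr_ge0 (s j); nra.
  have colD : \sum_j \sum_l b j l ^+ 2 * s l ^+ 2 <= D.
    rewrite exchange_big /=; apply: le_trans sD; apply: ler_sum => l _.
    rewrite -mulr_suml; have := colb l; have := sqr_ge0 (s l); nra.
  lra.
apply: le_sqrtM_of_amgm => // c c0.
have -> : (c * G + D / c) / 2 = (c * G + B / c) / 2 + (D - B) / c / 2.
  by field; rewrite gt_eqF.
apply: ler_wpDr; first by rewrite !divr_ge0 ?subr_ge0 // ltW.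
have -> : (c * G + B / c) / 2 = \sum_j \sum_l
    (c * (a j l ^+ 2 / (s j * s l)) + b j l ^+ 2 * (s j * s l) / c) / 2.
  rewrite /G /B mulr_sumr !mulr_suml -big_split /= mulr_suml.
  apply: eq_bigr => j _; rewrite mulr_sumr !mulr_suml -big_split /= mulr_suml.
  by apply: eq_bigr.
apply: ler_sum => j _; apply: ler_sum => l _.
by apply: mul_le_amgm; rewrite ?mulr_ge0 //; exact: sa.
Qed.

End WeightedSchur.

Section WeightedTraceNorm.
Variable R : realType.
Local Notation C := (R[i]).
Local Notation Re := (@complex.Re R).

Lemma ler_Re (x y : C) : x <= y -> Re x <= Re y.
Proof. by rewrite lecE => /andP[]. Qed.

Lemma normC_Re (z : C) : `|z| = (Re `|z|)%:C%C.
Proof. by rewrite RRe_real // ger0_real ?normr_ge0. Qed.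

Lemma Re_le_normC (z : C) : Re z <= Re `|z|.
Proof. by apply: le_trans (ler_Re (normc_ge_Re z)); exact: ler_norm. Qed.

Lemma sqrtC_Re (x : C) : 0 <= x -> sqrtC x = (Num.sqrt (Re x))%:C%C.
Proof.
move=> x0; have xE : x = (Num.sqrt (Re x) ^+ 2)%:C%C.
  by rewrite sqr_sqrtr ?(ler_Re x0) // RRe_real // ger0_real.
by rewrite {1}xE rmorphXn sqrCK // lecR sqrtr_ge0.
Qed.

Lemma invsqrtC_Re (x : C) : 0 <= x ->
  (if x == 0 then 0 else (sqrtC x)^-1) = ((Num.sqrt (Re x))^-1)%:C%C.
Proof.
move=> x0; case: eqP => [->|_]; first by rewrite sqrtr0 invr0.
by rewrite sqrtC_Re // fmorphV.
Qed.

Lemma Re_sum_normC_sqr_le1 (I : finType) (F : I -> C) :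
  \sum_i `|F i| ^+ 2 <= 1 -> \sum_i Re `|F i| ^+ 2 <= 1.
Proof.
under eq_bigr do rewrite normC_Re -rmorphXn.
by rewrite -rmorph_sum -(rmorph1 (real_complex R)) lecR.
Qed.

Lemma mxtrace_conj_diag_sqr n (X W : 'M[C]_n) (g : 'rV[C]_n) :
  \tr (X *m (W^t* *m diag_mx g *m W) *m (X *m (W^t* *m diag_mx g *m W))) =
  \sum_j \sum_l (W *m X *m W^t*) j l * g 0 l * ((W *m X *m W^t*) l j * g 0 j).
Proof.
set Y := W *m X *m W^t*.
rewrite !mulmxA mxtrace_mulC !mulmxA.
have -> : W *m X *m W^t* *m diag_mx g *m W *m X *m W^t* *m diag_mx g =
    (Y *m diag_mx g) *m (Y *m diag_mx g) by rewrite !mulmxA.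
apply: eq_bigr => j _; rewrite mxE; apply: eq_bigr => l _.
by rewrite !mul_mx_diag !mxE.
Qed.

(* Weighted Cauchy-Schwarz for the trace norm, with weight W^* diag(s^2) W;
   [g] is its generalized inverse square root, since 0^-1 = 0. *)
Lemma trnorm_le_weighted n (X W : 'M[C]_n) (s : 'I_n -> R) (g : 'rV[C]_n) (D : R) :
  X^t* = X -> W \is unitarymx -> (forall j, 0 <= s j) ->
  (forall j, g 0 j = ((s j)^-1)%:C%C) ->
  (forall j l, s l = 0 -> (W *m X *m W^t*) j l = 0) ->
  \sum_j s j ^+ 2 <= D ->
  Re (trnorm X) <= Num.sqrt (D *
    Re (\tr (X *m (W^t* *m diag_mx g *m W) *m (X *m (W^t* *m diag_mx g *m W))))).
Proof.
move=> XC Wu s_ge0 gE Ycol sD.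
have [Q Qpi trQ] := trnorm_partial_isometry X.
set Y := W *m X *m W^t*; set P := W *m Q *m W^t*.
have Pi : partial_isometry P by exact: partial_isometry_conj.
have YC : Y^t* = Y by rewrite /Y !trmxC_mul trmxCK XC mulmxA.
have Yconj j l : Y l j = (Y j l)^* by rewrite -[in LHS]YC !mxE.
have Ysupp j l : s j * s l = 0 -> Y j l = 0.
  move/eqP; rewrite mulf_eq0 => /orP[] /eqP sz; last exact: Ycol.
  by rewrite Yconj Ycol // rmorph0.
pose a j l := Re `|Y j l|; pose b j l := Re `|P l j|.
have trYP : trnorm X = \sum_j \sum_l Y j l * P l j.
  rewrite trQ -(mxtrace_unitary_conj (X *m Q) Wu) -unitary_conj_mul //.
  by apply: eq_bigr => j _; rewrite mxE.
have trXK : Re (\tr (X *m (W^t* *m diag_mx g *m W) *m (X *m (W^t* *m diag_mx g *m W))))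
    = \sum_j \sum_l a j l ^+ 2 / (s j * s l).
  rewrite mxtrace_conj_diag_sqr -/Y raddf_sum; apply: eq_bigr => j _.
  rewrite raddf_sum; apply: eq_bigr => l _.
  rewrite (Yconj j l) !gE mulrACA -normCK normC_Re -rmorphXn -!rmorphM /=.
  by rewrite invfM [(s l)^-1 * _]mulrC.
rewrite trXK trYP; apply: le_trans (Re_le_normC _) _.
have YP_le : `|\sum_j \sum_l Y j l * P l j| <= \sum_j \sum_l `|Y j l| * `|P l j|.
  apply: le_trans (ler_norm_sum _ _ _) _; apply: ler_sum => j _.
  apply: le_trans (ler_norm_sum _ _ _) _; apply: ler_sum => l _.
  by rewrite normrM.
apply: le_trans (ler_Re YP_le) _.
have -> : Re (\sum_j \sum_l `|Y j l| * `|P l j|) = \sum_j \sum_l a j l * b j l.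
  rewrite raddf_sum; apply: eq_bigr => j _; rewrite raddf_sum; apply: eq_bigr => l _.
  by rewrite [`|Y j l|]normC_Re [`|P l j|]normC_Re -rmorphM.
apply: weighted_schur_bound => //.
- by move=> j l; apply: ler_Re (normr_ge0 (Y j l)).
- by move=> j l; apply: ler_Re (normr_ge0 (P l j)).
- by move=> j l /Ysupp Y0; rewrite /a Y0 normr0.
- by move=> j; apply: Re_sum_normC_sqr_le1; exact: partial_isometry_col_le1.
- by move=> l; apply: Re_sum_normC_sqr_le1; exact: partial_isometry_row_le1.
Qed.

End WeightedTraceNorm.

Section DistanceFromUniform.
Variable R : realType.
Local Notation C := (R[i]).
Local Notation Re := (@complex.Re R).
Variables (dA dB : nat) (rho : 'M[C]_(dA * dB)) (tau : 'M[C]_dB).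
Hypotheses (psd_rho : psdmx rho) (psd_tau : psdmx tau).
Local Notation tens1mx M := ((1%:M : 'M[C]_dA) *t M).
Local Notation rhoB := (ptrA rho).
Local Notation Delta := (rho - unif_tens dA rhoB).
Local Notation U := (spectralmx tau).
Local Notation t := (spectral_diag tau).

Lemma d_u_le_trnorm (sigma : 'M[C]_dB) : psdmx sigma -> \tr sigma = \tr rhoB ->
  d_u rho <= Re (trnorm (rho - unif_tens dA sigma)) / 2.
Proof.
move=> psd_sigma tr_sigma; apply: ge_inf; last by exists sigma.
exists 0 => _ [sigma' [_ _ ->]].
by rewrite divr_ge0 ?ler0n // (ler_Re (trnorm_ge0 _)).
Qed.

Lemma Delta_trmxC : Delta^t* = Delta.
Proof.
have /hermitianmxCP rhoC := psd_rho.1.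
have /hermitianmxCP rhoBC := (psdmx_ptrA psd_rho).1.
rewrite trmxCD trmxCN rhoC /unif_tens linearZ /= map_mxZ trmxC_tens trmxC1 rhoBC.
by congr (_ - _ *: _); apply: geC0_conj; rewrite invr_ge0 ler0n.
Qed.

Lemma mxtrace_sub_unif_sqr (X : 'M[C]_(dA * dB)) (T : 'M[C]_dB) : (0 < dA)%N ->
  let Y := (X - unif_tens dA (ptrA X)) *m tens1mx T in
  dA%:R * \tr (Y *m Y) = dA%:R * \tr (X *m tens1mx T *m (X *m tens1mx T))
    - \tr (ptrA X *m T *m ptrA X *m T).
Proof.
move=> dA_gt0 /=; set Z := tens1mx (ptrA X *m T).
set c := \tr (ptrA X *m T *m ptrA X *m T).
have dA_neq0 : (dA%:R : C) != 0 by rewrite pnatr_eq0 -lt0n.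
have -> : (X - unif_tens dA (ptrA X)) *m tens1mx T = X *m tens1mx T - (dA%:R)^-1 *: Z.
  by rewrite /unif_tens mulmxBl -scalemxAl tens1mx_mul.
have trXZ : \tr (X *m tens1mx T *m Z) = c.
  by rewrite -mulmxA tens1mx_mul mxtrace_mulC mxtrace_tens1mx_mul mxtrace_mulC !mulmxA.
have trZX : \tr (Z *m (X *m tens1mx T)) = c by rewrite mxtrace_mulC.
have trZZ : \tr (Z *m Z) = dA%:R * c by rewrite tens1mx_mul mxtrace_tens1mx !mulmxA.
rewrite mulmxBl !mulmxBr -!scalemxAl -!scalemxAr scalerA !raddfB /= !mxtraceZ.
by rewrite trXZ trZX trZZ; field.
Qed.

Local Notation W := (tens1mx U).

Lemma tens1mx_unitary (V : 'M[C]_dB) : V \is unitarymx -> tens1mx V \is unitarymx.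
Proof.
move=> Vu; apply/unitarymxP.
by rewrite trmxC_tens trmxC1 tensmx_mul mulmx1 (unitarymxP Vu) tensmx11.
Qed.

Section Support.
Hypothesis supp_rhoB : supp_sub rhoB tau.

Lemma spectral_rhoB_row_eq0 b b' : t 0 b = 0 -> (U *m rhoB) b b' = 0.
Proof.
move=> tb0; move: supp_rhoB => /submxP [D rhoBE].
have -> : rhoB = tau *m D^T by rewrite -[rhoB]trmxK rhoBE trmx_mul trmxK.
have Utau : U *m tau = diag_mx t *m U.
  by rewrite -(hermitian_spectral_conj psd_tau.1) mulmxKtV // spectral_unitarymx.
by rewrite mulmxA Utau -mulmxA mul_diag_mx mxE tb0 mul0r.
Qed.

(* The diagonal entries of W rho W^* in the block of b are nonnegative and sum
   to the (b, b) entry of U rho_B U^*, which vanishes. *)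
Lemma spectral_rho_row_eq0 a b :
  t 0 b = 0 -> row (mxtens_index (a, b)) W *m rho = 0.
Proof.
move=> tb0; apply: psdmx_quad_eq0 => //; rewrite -quad_diag_rowE.
set Z := W *m rho *m W^t*.
have Zbb : ptrA Z b b = 0.
  rewrite /Z trmxC_tens trmxC1 ptrA_tens1mx_conj mxE big1 // => k _.
  by rewrite spectral_rhoB_row_eq0 // mul0r.
have Z_ge0 a' : 0 <= Z (mxtens_index (a', b)) (mxtens_index (a', b)).
  by rewrite /Z quad_diag_rowE; exact: psd_rho.2.
rewrite mxE in Zbb; exact: (psumr_eq0P (fun a' _ => Z_ge0 a') Zbb).
Qed.

Lemma spectral_Delta_row_eq0 a b :
  t 0 b = 0 -> row (mxtens_index (a, b)) W *m Delta = 0.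
Proof.
move=> tb0; rewrite /unif_tens mulmxBr spectral_rho_row_eq0 // -scalemxAr.
rewrite -row_mul tens1mx_mul.
have -> : row (mxtens_index (a, b)) (tens1mx (U *m rhoB)) = 0.
  apply/rowP => j; case: (mxtens_indexP j) => a' b'.
  by rewrite mxE tensmxE spectral_rhoB_row_eq0 // mulr0 mxE.
by rewrite scaler0 subr0.
Qed.

Lemma spectral_Delta_col_eq0 j a b : t 0 b = 0 ->
  (W *m Delta *m W^t*) j (mxtens_index (a, b)) = 0.
Proof.
move=> tb0; have DC : (W *m Delta *m W^t*)^t* = W *m Delta *m W^t*.
  by rewrite !trmxC_mul trmxCK Delta_trmxC mulmxA.
have rowE : row (mxtens_index (a, b)) (W *m Delta *m W^t*) = 0.
  by rewrite !row_mul spectral_Delta_row_eq0 // mul0mx.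
have := congr1 (fun v : 'rV[C]_(dA * dB) => v 0 j) rowE; rewrite /= mxE [RHS]mxE => e.
by rewrite -DC mxE [_^T _ _]mxE e conjC0.
Qed.

End Support.

Local Notation weight j := (Num.sqrt (Re (t 0 (@mxtens_unindex dA dB j).2))).

Lemma spectral_tau_ge0 b : 0 <= t 0 b.
Proof. exact: psdmx_spectral_diag_ge0. Qed.

Lemma tens1mx_invsqrtmxE :
  tens1mx (invsqrtmx tau) = W^t* *m diag_mx (\row_j ((weight j)^-1)%:C%C) *m W.
Proof.
rewrite /invsqrtmx /mxfun invmx_unitary ?spectral_unitarymx // -!tens1mx_mul.
rewrite trmxC_tens trmxC1 tens1mx_diag_mx; congr (_ *m diag_mx _ *m _).
by apply/rowP => j; rewrite !mxE invsqrtC_Re // spectral_tau_ge0.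
Qed.

Lemma sum_weight_sqr : \sum_j weight j ^+ 2 = dA%:R * Re (\tr tau).
Proof.
have -> : \tr tau = \sum_b t 0 b.
  rewrite {1}(hermitian_spectralE psd_tau.1) mxtrace_mulC mulmxA.
  by rewrite (unitarymxP (spectral_unitarymx tau)) mul1mx mxtrace_diag.
under eq_bigr do rewrite sqr_sqrtr ?(ler_Re (spectral_tau_ge0 _)) //.
rewrite big_mxtens_index raddf_sum.
under eq_bigr do under eq_bigr do rewrite mxtens_indexK /=.
by rewrite sumr_const card_ord mulr_natl.
Qed.

Lemma trnorm_Delta_le : supp_sub rhoB tau -> \tr tau <= 1 -> (0 < dA)%N ->
  Re (trnorm Delta) <= Num.sqrt (Re (dA%:R * GammaC rho tau
    - \tr (rhoB *m invsqrtmx tau *m rhoB *m invsqrtmx tau))).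
Proof.
move=> supp_rhoB tr_tau_le1 dA_gt0.
rewrite /GammaC -(mxtrace_sub_unif_sqr _ _ dA_gt0) /= tens1mx_invsqrtmxE.
rewrite mulr_natl raddfMn /= -mulr_natl.
apply: (trnorm_le_weighted (s := fun j => weight j)).
- exact: Delta_trmxC.
- exact/tens1mx_unitary/spectral_unitarymx.
- by move=> j; exact: sqrtr_ge0.
- by move=> j; rewrite mxE.
- move=> j l; case: (mxtens_indexP l) => a b; rewrite mxtens_indexK /= => /eqP.
  rewrite sqrtr_eq0 => Re_le0; apply: spectral_Delta_col_eq0 => //.
  have Re_eq0 : Re (t 0 b) = 0.
    by apply/eqP; rewrite eq_le Re_le0 (ler_Re (spectral_tau_ge0 b)).
  by rewrite -(RRe_real (ger0_real (spectral_tau_ge0 b))) Re_eq0.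
- rewrite sum_weight_sqr -[X in _ <= X]mulr1 ler_wpM2l ?ler0n //.
  exact: ler_Re tr_tau_le1.
Qed.

End DistanceFromUniform.

Unset Implicit Arguments.
Local Close Scope sesquilinear_scope.

Theorem lemma4 (R : realType) (dA dB : nat)
    (rho : 'M[R[i]]_(dA * dB)) (tau : 'M[R[i]]_dB) :
  psdmx rho -> 0 < \tr rho -> \tr rho <= 1 ->
  psdmx tau -> 0 < \tr tau -> \tr tau <= 1 ->
  supp_sub (ptrA rho) tau ->
  d_u rho <=
    Num.sqrt (@complex.Re R (dA%:R * GammaC rho tau
       - \tr (ptrA rho *m invsqrtmx tau *m ptrA rho *m invsqrtmx tau))) / 2.
Proof.
move=> psd_rho tr_rho_gt0 _ psd_tau _ tr_tau_le1 supp_rhoB.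
have dA_gt0 : (0 < dA)%N.
  rewrite lt0n; apply: contraTneq tr_rho_gt0 => dA0.
  by rewrite /mxtrace big1 ?ltxx // => -[k hk]; exfalso; move: hk; rewrite dA0.
apply: le_trans (d_u_le_trnorm (psdmx_ptrA psd_rho) erefl) _.
by rewrite ler_wpM2r ?invr_ge0 ?ler0n // trnorm_Delta_le.
Qed.
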